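(* Let $C\subseteq\{-1,1\}^n$ be a binary code (in $\pm1$ form) and let the channel output be $\mathbf{y}=\mathbf{x}\mathbf{z}$ (componentwise product), where $\mathbf{x}\in C$ is the transmitted codeword and $\mathbf{z}$ is the channel noise vector. Consider a message-passing decoder on a Tanner graph of $C$ whose messages take values in $\{-Q,\dots,Q\}$ for some integer $Q>0$, and whose messages are treated as random variables with conditional distributions given $\mathbf{y}$. Let $\mu_i^{(0)}$ be the channel message of variable node $i$, let $\boldsymbol{\mu}^{(t)}$ be the vector of all variable-to-check messages $\mu_{k,j}^{(t)}$ at the start of iteration $t$, and let the next ideal message from variable node $i$ to check node $j$ be $\nu_{i,j}^{(t+1)}=F_{i,j}(\boldsymbol{\mu}^{(t)},\mu_i^{(0)})$. Assume that, conditionally on $\mathbf{y}$, the messages $\mu_{k,j}^{(t)}$ (over all edges $(k,j)$) and $\mu_i^{(0)}$ are mutually independent. If $F_{i,j}$ is a symmetric message-update function with respect to $C$, and if $\mu_i^{(0)}$ and $\mu_{i,j}^{(t)}$ have symmetric distributions for all $(i,j)$, then the next ideal messages $\nu_{i,j}^{(t+1)}$ also have symmetric distributions, i.e. $\phi_{\nu_{i,j}^{(t+1)}\mid\mathbf{y}}(\nu\mid\mathbf{x}\mathbf{z})=\phi_{\nu_{i,j}^{(t+1)}\mid\mathbf{y}}(x_i\nu\mid\mathbf{z})$ for all $\nu$, all $\mathbf{z}$ and all $\mathbf{x}\in C$.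
   Context: $\phi$ denotes a probability (mass/density) function. For a codeword $\mathbf{x}\in C$ and a message vector $\boldsymbol{\mu}$ indexed by edges $(k,j)$, $\mathbf{x}\boldsymbol{\mu}$ denotes the vector with entries $x_k\mu_{k,j}$. A message-update function $F_{i,j}$ is symmetric with respect to $C$ if $F_{i,j}(\boldsymbol{\mu},\nu_i^{(0)})=x_iF_{i,j}(\mathbf{x}\boldsymbol{\mu},x_i\nu_i^{(0)})$ for every message vector $\boldsymbol{\mu}$, every $\nu_i^{(0)}$ and every codeword $\mathbf{x}\in C$. A message $\mu$ associated with variable node $i$ has a symmetric distribution if $\phi_{\mu\mid\mathbf{y}}(m\mid\mathbf{x}\mathbf{z})=\phi_{\mu\mid\mathbf{y}}(x_im\mid\mathbf{z})$ for all $m$, all $\mathbf{z}$ and all $\mathbf{x}\in C$. *)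

From HB Require Import structures.
From mathcomp Require Import all_boot all_order all_algebra.
Set Implicit Arguments. Unset Strict Implicit. Unset Printing Implicit Defensive.
Import Order.TTheory GRing.Theory Num.Theory.
Local Open Scope ring_scope.

(* Message alphabet {-Q,...,Q}: ordinal k of 'I_(2Q+1) represents k - Q. *)
Definition msg (Q : nat) := 'I_(Q.*2.+1).
Definition msgval (Q : nat) (a : msg Q) : int := (a : nat)%:Z - Q%:Z.

(* action of a sign s in {-1,1} on a message: s * a
   (negation of the represented value is rev_ord). *)
Definition smul (R : ringType) (Q : nat) (s : R) (a : msg Q) : msg Q :=
  if s == -1 then rev_ord a else a.

Definition edge (n m : nat) (E : {set 'I_n * 'I_m}) : finType :=
  {e : 'I_n * 'I_m | e \in E}.
Definition vnode (n m : nat) (E : {set 'I_n * 'I_m}) (e : edge E) : 'I_n :=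
  (val e).1.

Definition msgvec (n m Q : nat) (E : {set 'I_n * 'I_m}) := {ffun edge E -> msg Q}.
Definition chvec (n Q : nat) := {ffun 'I_n -> msg Q}.

Definition cw_mul (R : ringType) (n : nat) (x z : 'rV[R]_n) : 'rV[R]_n :=
  \row_i (x 0 i * z 0 i).

Definition sign_vec (R : ringType) (n m Q : nat) (E : {set 'I_n * 'I_m})
  (x : 'rV[R]_n) (mu : msgvec Q E) : msgvec Q E :=
  [ffun e => smul (x 0 (vnode e)) (mu e)].

Definition pm1_code (R : ringType) (n : nat) (C : pred 'rV[R]_n) : Prop :=
  forall x, C x -> forall i, x 0 i = 1 \/ x 0 i = -1.

Definition symmetric_update (R : ringType) (n m Q : nat) (E : {set 'I_n * 'I_m})
  (C : pred 'rV[R]_n) (i : 'I_n) (F : msgvec Q E -> msg Q -> msg Q) : Prop :=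
  forall (mu : msgvec Q E) (nu0 : msg Q) (x : 'rV[R]_n), C x ->
    F mu nu0 = smul (x 0 i) (F (sign_vec x mu) (smul (x 0 i) nu0)).

Definition symmetric_dist (R : ringType) (n Q : nat) (C : pred 'rV[R]_n)
  (i : 'I_n) (phi : 'rV[R]_n -> msg Q -> R) : Prop :=
  forall (a : msg Q) (z x : 'rV[R]_n), C x ->
    phi (cw_mul x z) a = phi z (smul (x 0 i) a).

Section Joint.
Variables (R : numDomainType) (n m Q : nat) (E : {set 'I_n * 'I_m}).

(* J y mu mu0 : joint conditional pmf, given y, of (mu^(t), mu^(0)) *)
Definition joint := 'rV[R]_n -> msgvec Q E -> chvec n Q -> R.

Definition is_cond_pmf (J : joint) : Prop :=
  forall y, (forall mu mu0, 0 <= J y mu mu0) /\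
            \sum_(mu : msgvec Q E) \sum_(mu0 : chvec n Q) J y mu mu0 = 1.

Definition edge_marg (J : joint) (e : edge E) (y : 'rV[R]_n) (a : msg Q) : R :=
  \sum_(mu : msgvec Q E) \sum_(mu0 : chvec n Q | mu e == a) J y mu mu0.

Definition chan_marg (J : joint) (k : 'I_n) (y : 'rV[R]_n) (a : msg Q) : R :=
  \sum_(mu : msgvec Q E) \sum_(mu0 : chvec n Q | mu0 k == a) J y mu mu0.

Definition cond_indep (J : joint) : Prop :=
  forall y mu mu0, J y mu mu0 =
    (\prod_(e : edge E) edge_marg J e y (mu e)) *
    \prod_(k : 'I_n) chan_marg J k y (mu0 k).

Definition next_dist (J : joint) (F : edge E -> msgvec Q E -> msg Q -> msg Q)
  (e : edge E) (y : 'rV[R]_n) (v : msg Q) : R :=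
  \sum_(mu : msgvec Q E)
    \sum_(mu0 : chvec n Q | F e mu (mu0 (vnode e)) == v) J y mu mu0.
End Joint.

(* Flipping the signs of the channel output by a codeword x amounts, for each
   message, to multiplying it by the sign x_k of its variable node.  By
   conditional independence the joint pmf of all messages given y is the product
   of the marginals, which are symmetric; hence the joint pmf given x z is the
   joint pmf given z evaluated at the sign-flipped messages.  Since the update
   F_{i,j} commutes with these sign flips (up to x_i), the pmf of the next
   message is obtained by reindexing the defining sum along the flips, which
   are involutions. *)
From HB Require Import structures.
From mathcomp Require Import all_boot all_order all_algebra.
Import Order.TTheory GRing.Theory Num.Theory.
Set Implicit Arguments. Unset Strict Implicit. Unset Printing Implicit Defensive.
Local Open Scope ring_scope.

Lemma smulK (R : nzRingType) (Q : nat) (s : R) : involutive (@smul R Q s).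
Proof. by move=> a; rewrite /smul; case: (s == -1) => //; apply: rev_ordK. Qed.

Definition sign_chvec (R : nzRingType) (n Q : nat) (x : 'rV[R]_n)
  (mu0 : chvec n Q) : chvec n Q :=
  [ffun k => smul (x 0 k) (mu0 k)].

Lemma sign_vecK (R : nzRingType) (n m Q : nat) (E : {set 'I_n * 'I_m})
  (x : 'rV[R]_n) : involutive (@sign_vec R n m Q E x).
Proof. by move=> mu; apply/ffunP => e; rewrite !ffunE smulK. Qed.

Lemma sign_chvecK (R : nzRingType) (n Q : nat) (x : 'rV[R]_n) :
  involutive (@sign_chvec R n Q x).
Proof. by move=> mu0; apply/ffunP => k; rewrite !ffunE smulK. Qed.

Section SymmetricJoint.
Variables (R : numDomainType) (n m Q : nat) (E : {set 'I_n * 'I_m}).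
Variables (C : pred 'rV[R]_n) (J : joint R Q E).

Definition symmetric_joint : Prop :=
  forall (x z : 'rV[R]_n) mu mu0, C x ->
    J (cw_mul x z) mu mu0 = J z (sign_vec x mu) (sign_chvec x mu0).

Lemma cond_indep_symmetric_joint :
  cond_indep J ->
  (forall k, symmetric_dist C k (chan_marg J k)) ->
  (forall e, symmetric_dist C (vnode e) (edge_marg J e)) ->
  symmetric_joint.
Proof.
move=> indJ sym_chan sym_edge x z mu mu0 Cx; rewrite !indJ.
congr (_ * _).
- by apply: eq_bigr => e _; rewrite ffunE sym_edge.
- by apply: eq_bigr => k _; rewrite ffunE sym_chan.
Qed.

Lemma next_dist_symmetric (F : edge E -> msgvec Q E -> msg Q -> msg Q) e :
  symmetric_joint -> symmetric_update C (vnode e) (F e) ->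
  symmetric_dist C (vnode e) (next_dist J F e).
Proof.
move=> symJ symF v z x Cx; rewrite /next_dist.
rewrite (reindex_inj (can_inj (sign_vecK x))) /=; apply: eq_bigr => mu _.
rewrite (reindex_inj (can_inj (sign_chvecK x))) /=.
apply: eq_big => [mu0|mu0 _]; last by rewrite symJ // sign_vecK sign_chvecK.
by rewrite (symF mu _ x Cx) ffunE (can_eq (smulK _)).
Qed.

End SymmetricJoint.

Theorem lemma1 (R : realFieldType) (n m Q : nat) (HQ : (0 < Q)%N)
  (C : pred 'rV[R]_n) (HC : pm1_code C)
  (E : {set 'I_n * 'I_m})
  (J : joint R Q E) (HJ : is_cond_pmf J) (Hind : cond_indep J)
  (F : edge E -> msgvec Q E -> msg Q -> msg Q)
  (HF : forall e, symmetric_update C (vnode e) (F e))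
  (H0 : forall i, symmetric_dist C i (chan_marg J i))
  (Ht : forall e, symmetric_dist C (vnode e) (edge_marg J e)) :
  forall e, symmetric_dist C (vnode e) (next_dist J F e).
Proof.
move=> e; apply: next_dist_symmetric (HF e).
exact: cond_indep_symmetric_joint.
Qed.
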